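(* Let $\mathfrak{g}$ be a finite-dimensional real Lie algebra, $h\colon\mathfrak{g}^{*}\to\mathbb{R}$ smooth, and $\eta(q,p) := Dh(-\operatorname{ad}_{q}^{*}p)\in\mathfrak{g}$ for $(q,p)\in\mathfrak{g}\times\mathfrak{g}^{*}$. Consider the system $$\dot q = \operatorname{ad}_{\eta(q,p)}q,\qquad \dot p = -\operatorname{ad}_{\eta(q,p)}^{*}p$$ (the canonical Hamiltonian system on $T^{*}\mathfrak{g}$ with Hamiltonian $H(q,p) = h(-\operatorname{ad}_q^{*}p)$). Let $\kappa(x,y) = \operatorname{tr}(\operatorname{ad}_x\circ\operatorname{ad}_y)$ be the Killing form of $\mathfrak{g}$. Then $\kappa(q,q)$ is an invariant (conserved quantity) of this system.
   Context: $\operatorname{ad}_{x}y=[x,y]$, $\operatorname{ad}_{x}^{*}$ is its dual: $\langle \operatorname{ad}_{x}^{*}\alpha, y\rangle = \langle \alpha,[x,y]\rangle$. For smooth $f\colon\mathfrak{g}^{*}\to\mathbb{R}$, $Df(\mu)\in\mathfrak{g}$ is defined by $\langle\delta\mu, Df(\mu)\rangle = \frac{d}{ds}\big|_{s=0}f(\mu+s\delta\mu)$. *)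

From HB Require Import structures.
From mathcomp Require Import all_boot all_order all_algebra.
From mathcomp Require Import all_classical all_reals all_analysis.
Set Implicit Arguments. Unset Strict Implicit. Unset Printing Implicit Defensive.
Import Order.TTheory GRing.Theory Num.Theory.
Import numFieldNormedType.Exports.
Local Open Scope ring_scope.
Local Open Scope classical_set_scope.

(* A finite-dimensional real Lie algebra g of dimension n is modelled as the
   vector space 'rV[R]_n equipped with a bracket br.  The dual g^* is also
   modelled as 'rV[R]_n, with the pairing <alpha, x> = sum_i alpha_i x_i. *)

Definition is_lie_bracket (R : realType) (n : nat)
    (br : 'rV[R]_n -> 'rV[R]_n -> 'rV[R]_n) : Prop :=
  [/\ (forall (a : R) x y z, br (a *: x + y) z = a *: br x z + br y z),
      (forall (a : R) x y z, br z (a *: x + y) = a *: br z x + br z y),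
      (forall x, br x x = 0)
    & (forall x y z, br x (br y z) + br y (br z x) + br z (br x y) = 0)].

Definition pairing (R : realType) (n : nat) (alpha x : 'rV[R]_n) : R :=
  \sum_(i < n) alpha 0 i * x 0 i.

(* ad^*_x alpha, determined by <ad^*_x alpha, y> = <alpha, [x,y]>;
   its i-th coordinate is <alpha, [x, e_i]>. *)
Definition adstar (R : realType) (n : nat)
    (br : 'rV[R]_n -> 'rV[R]_n -> 'rV[R]_n) (x alpha : 'rV[R]_n) : 'rV[R]_n :=
  \row_(i < n) pairing alpha (br x (delta_mx 0 i)).

(* Df(mu) in g, determined by <dmu, Df(mu)> = d/ds f(mu + s dmu) at s = 0;
   its i-th coordinate is the directional derivative along e_i. *)
Definition Dfun (R : realType) (n : nat) (f : 'rV[R]_n -> R) (mu : 'rV[R]_n)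
  : 'rV[R]_n :=
  \row_(i < n) 'D_(delta_mx 0 i) f mu.

Definition killing (R : realType) (n : nat)
    (br : 'rV[R]_n -> 'rV[R]_n -> 'rV[R]_n) (x y : 'rV[R]_n) : R :=
  \tr (lin1_mx (br x \o br y)).

Fixpoint Ck (R : realType) (n : nat) (k : nat) (f : 'rV[R]_n -> R) : Prop :=
  match k with
  | 0 => continuous f
  | k'.+1 => continuous f /\ (forall x v, derivable f x v) /\
             (forall v, Ck k' ('D_v f))
  end.

Definition smooth (R : realType) (n : nat) (f : 'rV[R]_n -> R) : Prop :=
  forall k, Ck k f.

From HB Require Import structures.
From mathcomp Require Import all_boot all_order all_algebra.
From mathcomp Require Import all_classical all_reals all_analysis.
Import Order.TTheory GRing.Theory Num.Theory.
Import numFieldNormedType.Exports.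
Local Open Scope ring_scope.
Local Open Scope classical_set_scope.
Set Implicit Arguments. Unset Strict Implicit.

(* Write A(t) = ad_(q t). Since q' = [eta, q] and ad is a Lie algebra morphism,
   A' = [ad_eta, A], so d/dt tr(A A) = 2 kappa(q, [eta, q]), which vanishes by
   ad-invariance and symmetry of the Killing form. *)

Section RealDerivatives.
Variable R : realType.

Lemma is_derive_mx_coord m k (M : R -> 'M[R]_(m, k)) t i j :
  derivable M t 1 -> is_derive t 1 (fun s => M s i j) (derive1 M t i j).
Proof.
move=> dM; apply: DeriveDef; first exact: (derivable_mxP M t 1).1 dM i j.
by rewrite derive1E derive_mx // mxE.
Qed.

Lemma is_derive_linear_coord n m k (L : {linear 'rV[R]_n -> 'M[R]_(m, k)})
    (q : R -> 'rV[R]_n) t i j :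
  derivable q t 1 -> is_derive t 1 (fun s => L (q s) i j) (L (derive1 q t) i j).
Proof.
move=> dq.
have expand x : L x i j = \sum_(l < n) L (delta_mx 0 l) i j * x 0 l.
  rewrite {1}(row_sum_delta x) linear_sum summxE.
  by apply: eq_bigr => l _; rewrite linearZ mxE mulrC.
rewrite expand (_ : (fun s => _) =
  \sum_(l < n) (fun s => L (delta_mx 0 l) i j * q s 0 l)); last first.
  by apply/funext => s; rewrite expand fct_sumE.
apply: is_derive_sum => l; apply: is_deriveZ; exact: is_derive_mx_coord.
Qed.

Lemma is_derive_mxtrace_mul n (A B : R -> 'M[R]_n) (t : R) (dA dB : 'M[R]_n) :
  (forall i j, is_derive t 1 (fun s => A s i j) (dA i j)) ->
  (forall i j, is_derive t 1 (fun s => B s i j) (dB i j)) ->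
  is_derive t 1 (fun s => \tr (A s *m B s)) (\tr (dA *m B t + A t *m dB)).
Proof.
move=> dAt dBt.
rewrite (_ : (fun s => _) =
  \sum_(i < n) \sum_(l < n) (fun s => A s i l * B s l i)); last first.
  by apply/funext => s; rewrite fct_sumE /mxtrace; apply: eq_bigr => i _;
     rewrite mxE fct_sumE.
rewrite mxtraceD /mxtrace -big_split; apply: is_derive_sum => i.
rewrite !mxE -big_split; apply: is_derive_sum => l.
apply: is_derive_eq (is_deriveM (dAt i l) (dBt l i)) _.
by rewrite /= addrC [_ *: dA i l]mulrC.
Qed.

Lemma is_derive_0_is_cst_interval (f : R -> R) (I : set R) :
  is_interval I -> (forall x, I x -> is_derive x 1 f 0) ->
  forall s t, I s -> I t -> f s = f t.
Proof.
move=> Iitv df s t Is It.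
wlog st : s t Is It / s <= t.
  by move=> H; case: (leP s t) => [/H|/ltW /H /esym]; apply.
have Ist x : s <= x <= t -> I x by apply: Iitv.
have dfst x : x \in `]s, t[%R -> is_derive x 1 f 0.
  by rewrite in_itv /= => /andP[sx xt]; apply/df/Ist; rewrite !ltW.
have fcont : {within [set` `[s, t]%R], continuous f}.
  apply: continuous_in_subspaceT => x /set_mem /=; rewrite in_itv /= => /Ist Ix.
  have [dfx _] := df x Ix.
  exact/differentiable_continuous/derivable1_diffP.
have [x _] := MVT_segment st dfst fcont.
by rewrite mul0r => /subr0_eq.
Qed.

End RealDerivatives.

Section KillingForm.
Variables (R : realType) (n : nat) (br : 'rV[R]_n -> 'rV[R]_n -> 'rV[R]_n).
Hypothesis hbr : is_lie_bracket br.

Let br_linearl : forall (a : R) x y z, br (a *: x + y) z = a *: br x z + br y z.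
Proof. by case: hbr. Qed.

Let br_linearr : forall (a : R) x y z, br z (a *: x + y) = a *: br z x + br z y.
Proof. by case: hbr. Qed.

Let br_linear x : {linear 'rV[R]_n -> 'rV[R]_n} :=
  HB.pack (br x)
    (GRing.isLinear.Build R _ _ _ (br x) (fun a u v => br_linearr a u v x)).

Lemma br_antisym x y : br x y = - br y x.
Proof.
have brDl u v z : br (u + v) z = br u z + br v z.
  by have := br_linearl 1 u v z; rewrite !scale1r.
have brDr u v z : br z (u + v) = br z u + br z v.
  by have := br_linearr 1 u v z; rewrite !scale1r.
have brxx z : br z z = 0 by case: hbr.
apply/eqP; rewrite -addr_eq0; apply/eqP.
have := brxx (x + y); rewrite brDl !brDr !brxx.
by rewrite add0r addr0 addrC.
Qed.

Definition ad_mx x : 'M[R]_n := lin1_mx (br x).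

Lemma mul_ad_mx u x : u *m ad_mx x = br x u.
Proof. exact: (mul_rV_lin1 (br_linear x)). Qed.

Let ad_mx_is_linear (a : R) x y : ad_mx (a *: x + y) = a *: ad_mx x + ad_mx y.
Proof. by apply/matrixP => i j; rewrite !mxE br_linearl !mxE. Qed.

Let ad_mx_linear : {linear 'rV[R]_n -> 'M[R]_n} :=
  HB.pack ad_mx (GRing.isLinear.Build R _ _ _ ad_mx ad_mx_is_linear).

(* The order is reversed because matrices act on the right of row vectors. *)
Lemma ad_mx_bracket x y :
  ad_mx (br x y) = ad_mx y *m ad_mx x - ad_mx x *m ad_mx y.
Proof.
apply/row_matrixP => i; rewrite !rowE mulmxBr !mulmxA !mul_ad_mx.
set u := delta_mx 0 i.
have jacobi : br x (br y u) + br y (br u x) + br u (br x y) = 0 by case: hbr.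
have brNr v : br y (- v) = - br y v := linearN (br_linear y) v.
rewrite [br u x]br_antisym [br u _]br_antisym brNr in jacobi.
by apply/esym/eqP; rewrite -subr_eq0 jacobi.
Qed.

Lemma killingE x y : killing br x y = \tr (ad_mx y *m ad_mx x).
Proof.
rewrite /killing; congr (\tr _); apply/row_matrixP => i.
rewrite !rowE mulmxA !mul_ad_mx.
exact: (mul_rV_lin1 (br_linear x \o br_linear y)).
Qed.

Lemma killingC x y : killing br x y = killing br y x.
Proof. by rewrite !killingE mxtrace_mulC. Qed.

Lemma killing_ad_invariant x y z :
  killing br (br y x) z = - killing br x (br y z).
Proof.
rewrite !killingE !ad_mx_bracket mulmxBr mulmxBl !linearB /= !mulmxA.
rewrite -[ad_mx y *m ad_mx z *m ad_mx x]mulmxA [\tr (ad_mx y *m _)]mxtrace_mulC.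
by rewrite opprK addrC.
Qed.

Lemma killing_bracket_self x y : killing br x (br y x) = 0.
Proof.
by apply/eqP; rewrite -eqNr -killing_ad_invariant killingC.
Qed.

Lemma is_derive_killing_diag (q : R -> 'rV[R]_n) t : derivable q t 1 ->
  is_derive t 1 (fun s => killing br (q s) (q s))
    (killing br (q t) (derive1 q t) *+ 2).
Proof.
move=> dq; under eq_fun do rewrite killingE.
have dad i j := is_derive_linear_coord ad_mx_linear i j dq.
apply: is_derive_eq (is_derive_mxtrace_mul dad dad) _.
by rewrite mxtraceD killingE mulr2n; congr (_ + _); exact: mxtrace_mulC.
Qed.

Lemma killing_diag_conserved (eta q : R -> 'rV[R]_n) (I : set R) :
  is_interval I ->
  (forall t, I t -> derivable q t 1 /\ derive1 q t = br (eta t) (q t)) ->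
  forall s t, I s -> I t -> killing br (q s) (q s) = killing br (q t) (q t).
Proof.
move=> Iitv hq; apply: is_derive_0_is_cst_interval => // t It.
have [dq dqE] := hq t It.
apply: is_derive_eq (is_derive_killing_diag dq) _.
by rewrite dqE killing_bracket_self mul0rn.
Qed.

End KillingForm.

Theorem proposition4p2 (R : realType) (n : nat)
    (br : 'rV[R]_n -> 'rV[R]_n -> 'rV[R]_n) (hbr : is_lie_bracket br)
    (h : 'rV[R]_n -> R) (hsmooth : smooth h)
    (I : set R) (hIint : is_interval I) (hIopen : open I)
    (q p : R -> 'rV[R]_n)
    (hq : forall t, I t ->
       let eta := Dfun h (- adstar br (q t) (p t)) in
       derivable q t 1 /\ derive1 q t = br eta (q t))
    (hp : forall t, I t ->
       let eta := Dfun h (- adstar br (q t) (p t)) in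
       derivable p t 1 /\ derive1 p t = - adstar br eta (p t)) :
  forall s t, I s -> I t -> killing br (q s) (q s) = killing br (q t) (q t).
Proof.
pose eta t := Dfun h (- adstar br (q t) (p t)).
exact: (killing_diag_conserved hbr (eta := eta) hIint hq).
Qed.
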